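(* Let $A_1=P(s_1,\dots,s_k)$ and $A_2=P(r_1,\dots,r_k)$ be non-ground, simple and covering atoms, each containing at least one compound term, and suppose $A_1$ and $A_2$ are unifiable. Then for every position $j\in\{1,\dots,k\}$, $s_j$ is a compound term if and only if $r_j$ is a compound term.
   Context: A compound term is a term that is neither a variable nor a constant. $\mathrm{Var}(E)$ denotes the set of variables of $E$. A literal is simple if each argument is a variable, a constant, or a term $f(u_1,\dots,u_n)$ with each $u_i$ a variable or a constant. A literal (or clause) $E$ is covering if every compound term $t$ occurring in $E$ satisfies $\mathrm{Var}(t)=\mathrm{Var}(E)$. *)

From Stdlib Require Import List Arith.
Import ListNotations.

(* Variables and function symbols are named by natural numbers.
   A constant is a function symbol applied to no arguments. *)
Inductive term : Type :=
| Var (x : nat)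
| Fn (f : nat) (args : list term).

Fixpoint subst (sigma : nat -> term) (t : term) : term :=
  match t with
  | Var x => sigma x
  | Fn f l => Fn f (map (subst sigma) l)
  end.

Definition is_var (t : term) : Prop := exists x, t = Var x.
Definition is_const (t : term) : Prop := exists c, t = Fn c [].
Definition is_compound (t : term) : Prop := ~ is_var t /\ ~ is_const t.

Inductive var_in (x : nat) : term -> Prop :=
| vi_var : var_in x (Var x)
| vi_fn : forall f l t, In t l -> var_in x t -> var_in x (Fn f l).

Inductive subterm (t : term) : term -> Prop :=
| st_refl : subterm t t
| st_fn : forall f l u, In u l -> subterm t u -> subterm t (Fn f l).

Record atom : Type := mkAtom { apred : nat; aargs : list term }.

Definition subst_atom (sigma : nat -> term) (A : atom) : atom :=
  mkAtom (apred A) (map (subst sigma) (aargs A)).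

Definition var_in_atom (x : nat) (A : atom) : Prop :=
  exists t, In t (aargs A) /\ var_in x t.

Definition occurs_in_atom (t : term) (A : atom) : Prop :=
  exists u, In u (aargs A) /\ subterm t u.

Definition ground_atom (A : atom) : Prop := forall x, ~ var_in_atom x A.

Definition simple_atom (A : atom) : Prop :=
  Forall (fun t => is_var t \/ is_const t \/
            exists f us, t = Fn f us /\ Forall (fun u => is_var u \/ is_const u) us)
         (aargs A).

Definition covering_atom (A : atom) : Prop :=
  forall t, occurs_in_atom t A -> is_compound t ->
    forall x, var_in x t <-> var_in_atom x A.

Definition has_compound (A : atom) : Prop :=
  exists t, occurs_in_atom t A /\ is_compound t.

Definition unifiable (A1 A2 : atom) : Prop :=
  exists sigma : nat -> term, subst_atom sigma A1 = subst_atom sigma A2.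

(** If [s_j] is compound but [r_j] is a variable [x], covering and simplicity
    of the second atom force [x] to be an immediate argument of some compound
    argument [r_i = g(us)]. So [sigma x = sigma s_j] is an immediate argument of
    [sigma s_i]. Since [s_j] is compound and covering, every variable [y] of the
    first atom satisfies [|sigma y| < |sigma s_j|]; as [s_i] is simple, every
    immediate argument of [sigma s_i] is either smaller than [sigma s_j] or a
    constant, a contradiction. If [r_j] is a constant, [sigma s_j] would be one. *)

From Stdlib Require Import List Lia.

Fixpoint term_size (t : term) : nat :=
  match t with
  | Var _ => 1
  | Fn _ l => S (list_sum (map term_size l))
  end.

Lemma term_size_arg_lt f l a : In a l -> term_size a < term_size (Fn f l).
Proof.
  intros Ha; simpl.
  induction l as [|b l IH]; simpl in *; [contradiction|].
  destruct Ha as [->|Ha]; [lia|specialize (IH Ha); lia].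
Qed.

Lemma var_in_subst_size_le sigma y t :
  var_in y t -> term_size (sigma y) <= term_size (subst sigma t).
Proof.
  induction 1 as [|f l t Hin _ IH]; [simpl; lia|].
  pose proof (term_size_arg_lt f _ _ (in_map (subst sigma) l t Hin)).
  cbn [subst]; lia.
Qed.

Lemma var_in_subst_size_lt sigma y t :
  var_in y t -> ~ is_var t -> term_size (sigma y) < term_size (subst sigma t).
Proof.
  intros Hy Hnv; destruct Hy as [|f l t Hin Hy].
  - exfalso; apply Hnv; now exists y.
  - pose proof (var_in_subst_size_le sigma y t Hy).
    pose proof (term_size_arg_lt f _ _ (in_map (subst sigma) l t Hin)).
    cbn [subst]; lia.
Qed.

Lemma compound_subst_not_const sigma t : is_compound t -> ~ is_const (subst sigma t).
Proof.
  intros [Hv Hc] [c Ec].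
  destruct t as [x|f [|a l]].
  - apply Hv; now exists x.
  - apply Hc; now exists f.
  - discriminate Ec.
Qed.

Lemma subterm_var_in t u x : subterm t u -> var_in x t -> var_in x u.
Proof. induction 1; auto. intros; econstructor; eauto. Qed.

Lemma covering_compound_arg_var_in A t y :
  covering_atom A -> In t (aargs A) -> is_compound t ->
  var_in_atom y A -> var_in y t.
Proof.
  intros Hcov Ht Htc Hy.
  apply (Hcov t); [exists t; split; [exact Ht|constructor] | exact Htc | exact Hy].
Qed.

(* Simplicity is what makes the variables of a compound term its immediate arguments. *)
Lemma simple_covering_var_in_compound_arg A x :
  simple_atom A -> covering_atom A -> has_compound A -> var_in_atom x A ->
  exists g us, In (Fn g us) (aargs A) /\ In (Var x) us.
Proof.
  intros Hsim Hcov [t [[u [Hu Htu]] Htc]] Hx.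
  assert (Hxu : var_in x u).
  { apply (subterm_var_in t u x Htu), (Hcov t); [exists u; auto | exact Htc | exact Hx]. }
  unfold simple_atom in Hsim; rewrite Forall_forall in Hsim.
  destruct (Hsim u Hu) as [[z ->]|[[c ->]|[g [us [-> Hus]]]]].
  - inversion Htu; subst.
    exfalso; apply (proj1 Htc); now exists z.
  - inversion Htu; subst; [|contradiction].
    exfalso; apply (proj2 Htc); now exists c.
  - exists g, us; split; [exact Hu|].
    inversion Hxu as [| ? ? v Hv Hxv]; subst.
    rewrite Forall_forall in Hus.
    destruct (Hus v Hv) as [[z ->]|[c ->]]; inversion Hxv; subst; first [assumption|contradiction].
Qed.

Lemma covering_compound_image_not_arg sigma A t w g l :
  simple_atom A -> covering_atom A -> In t (aargs A) -> is_compound t ->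
  In w (aargs A) -> subst sigma w = Fn g l -> ~ In (subst sigma t) l.
Proof.
  intros Hsim Hcov Ht Htc Hw Hwl Hin.
  assert (Hvars : forall y, var_in_atom y A ->
                   term_size (sigma y) < term_size (subst sigma t)).
  { intros y Hy. apply var_in_subst_size_lt; [|exact (proj1 Htc)].
    exact (covering_compound_arg_var_in A t y Hcov Ht Htc Hy). }
  unfold simple_atom in Hsim; rewrite Forall_forall in Hsim.
  destruct (Hsim w Hw) as [[y ->]|[[c ->]|[h [vs [-> Hvs]]]]].
  - pose proof (term_size_arg_lt g l _ Hin) as Hlt; cbn [subst] in Hwl.
    rewrite <- Hwl in Hlt.
    specialize (Hvars y (ex_intro _ (Var y) (conj Hw (vi_var y)))); lia.
  - cbn in Hwl; injection Hwl as _ <-; contradiction.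
  - cbn [subst] in Hwl; injection Hwl as _ <-.
    apply in_map_iff in Hin as [v [Hv Hvin]].
    rewrite Forall_forall in Hvs.
    destruct (Hvs v Hvin) as [[y ->]|[c ->]].
    + assert (Hy : var_in_atom y A)
        by (exists (Fn h vs); split; [exact Hw | econstructor; [exact Hvin|constructor]]).
      specialize (Hvars y Hy); cbn in Hv; rewrite Hv in Hvars; lia.
    + apply (compound_subst_not_const sigma t Htc); now exists c.
Qed.

Lemma unifier_preserves_compound_arg sigma P s r j :
  simple_atom (mkAtom P s) -> covering_atom (mkAtom P s) ->
  simple_atom (mkAtom P r) -> covering_atom (mkAtom P r) -> has_compound (mkAtom P r) ->
  map (subst sigma) s = map (subst sigma) r -> j < length s ->
  is_compound (nth j s (Var 0)) -> is_compound (nth j r (Var 0)).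
Proof.
  intros Hss Hcs Hsr Hcr Hhr Heq Hj Htc.
  set (t := nth j s (Var 0)) in *.
  assert (Hlen : length s = length r)
    by (rewrite <- (length_map (subst sigma) s), Heq, length_map; reflexivity).
  assert (Himg : subst sigma t = subst sigma (nth j r (Var 0)))
    by (unfold t; rewrite <- (map_nth (subst sigma) s), <- (map_nth (subst sigma) r), Heq; reflexivity).
  split.
  - intros [x Ex].
    destruct (simple_covering_var_in_compound_arg (mkAtom P r) x Hsr Hcr Hhr)
      as [g [us [Hgus Hxus]]].
    { exists (Var x); split; [rewrite <- Ex; apply nth_In; cbn; lia | constructor]. }
    assert (Hw : In (subst sigma (Fn g us)) (map (subst sigma) s))
      by (rewrite Heq; now apply in_map).
    apply in_map_iff in Hw as [w [Hw Hws]].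
    apply (covering_compound_image_not_arg sigma (mkAtom P s) t w g (map (subst sigma) us));
      auto; [apply nth_In; exact Hj|].
    rewrite Himg, Ex; exact (in_map (subst sigma) us (Var x) Hxus).
  - intros [c Ec].
    apply (compound_subst_not_const sigma t Htc).
    rewrite Himg, Ec; now exists c.
Qed.

Theorem mainTheorem4 (k P : nat) (s r : list term) :
  length s = k -> length r = k ->
  ~ ground_atom (mkAtom P s) -> ~ ground_atom (mkAtom P r) ->
  simple_atom (mkAtom P s) -> simple_atom (mkAtom P r) ->
  covering_atom (mkAtom P s) -> covering_atom (mkAtom P r) ->
  has_compound (mkAtom P s) -> has_compound (mkAtom P r) ->
  unifiable (mkAtom P s) (mkAtom P r) ->
  forall j, j < k ->
    (is_compound (nth j s (Var 0)) <-> is_compound (nth j r (Var 0))).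
Proof.
  intros Hs Hr _ _ Hss Hsr Hcs Hcr Hhs Hhr [sigma Hu] j Hj.
  injection Hu as Hu.
  split; apply unifier_preserves_compound_arg with (sigma := sigma) (P := P);
    auto; lia.
Qed.
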